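(* Let $\vec\psi$ satisfy (H1) and let $\mu$ be a unimodular probability measure on $\mathcal T_*$. For every compact region $K$ of $(\beta,B)$ there is a deterministic $C<\infty$ such that for $(\beta,B)\in K$ and $T\in\mathcal T_*$: (a) $|\Phi_T(\beta,B,h)|\le C(D_o^2+1)$ for every $h\in\mathcal H^\star_\mu(\beta,B)$; (b) if moreover $\psi>0$ everywhere, then $|\Phi_T(\beta,B,h)|\le C(D_o+1)$ for every message $h$. Consequently, on compact regions, $\Phi_\mu$ is uniformly bounded on $\mathcal H^\star_\mu$ whenever $\mathbb E_\mu[D_o^2]<\infty$, and, if $\psi>0$, uniformly bounded on all messages whenever $\mathbb E_\mu[D_o]<\infty$.
   Context: $\mathcal T_*$: rooted locally finite trees $(T,o)$ up to isomorphism; $\partial v$ neighbours, $D_v=|\partial v|$. A measure $\mu$ on rooted graphs is unimodular if $\mathbb E_\mu[\sum_x f(T,o,x)]=\mathbb E_\mu[\sum_x f(T,x,o)]$ for all nonnegative Borel $f$ on doubly-rooted graphs. $\mathcal T_\to$: trees rooted at a directed edge; $\mu^\uparrow$: law of $(T,J\to o)$, $T\sim\mu$ conditioned on $D_o\ge1$, $J$ uniform on $\partial o$. Specification: finite $\mathscr X$, symmetric $\psi^\beta:\mathscr X^2\to[0,\infty)$, $\bar\psi^B:\mathscr X\to[0,\infty)$; $\xi=\log\psi$, $\bar\xi=\log\bar\psi$. (H1): $\bar\psi^B>0$; some $\sigma^{\mathrm{perm}}$ has $\min_\sigma\psi^\beta(\sigma,\sigma^{\mathrm{perm}})>0$; $\bar\xi^B(\sigma)$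 is $C^1$ in $B$; each $\xi^\beta(\sigma,\sigma')$ is $\equiv-\infty$ or finite and $C^1$ in $\beta$. A message is a measurable $(T,x\to y)\mapsto h_{x\to y}\in\Delta_{\mathscr X}$ mod $\mu^\uparrow$-null sets. $\mathcal H^\star_\mu(\beta,B)$: messages with $h_{x\to y}(\sigma)\propto\bar\psi^B(\sigma)\prod_{v\in\partial x\setminus y}\sum_{\sigma_v}\psi^\beta(\sigma,\sigma_v)h_{v\to x}(\sigma_v)$ $\mu^\uparrow$-a.s. Bethe functional: $\Phi_T(\beta,B,h)=\log\{\sum_\sigma\bar\psi(\sigma)\prod_{j\in\partial o}\sum_{\sigma_j}\psi(\sigma,\sigma_j)h_{j\to o}(\sigma_j)\}-\frac12\sum_{j\in\partial o}\log\{\sum_{\sigma,\sigma_j}\psi(\sigma,\sigma_j)h_{j\to o}(\sigma_j)h_{o\to j}(\sigma)\}$ (empty product $=1$, empty sum $=0$), $\Phi_\mu=\mathbb E_\mu\Phi_T$. *)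

From HB Require Import structures.
From mathcomp Require Import all_boot all_order all_algebra.
From mathcomp Require Import all_classical all_reals all_analysis.
Set Implicit Arguments. Unset Strict Implicit. Unset Printing Implicit Defensive.
Import Order.TTheory GRing.Theory Num.Theory.
Import numFieldNormedType.Exports.
Local Open Scope ring_scope.
Local Open Scope classical_set_scope.

Definition C1 {R : realType} (f : R -> R) : Prop :=
  (forall x : R, derivable f x 1) /\ continuous (f^`()).

(** A specification: psi b s t = psi^beta(s,t), psib B s = bar psi^B(s),
    together with the standing conditions (nonnegative, psi symmetric)
    and hypothesis (H1). *)
Definition H1 {R : realType} {X : finType}
    (psi : R -> X -> X -> R) (psib : R -> X -> R) : Prop :=
  (forall b s t, 0 <= psi b s t) /\
  (forall b s t, psi b s t = psi b t s) /\
  (forall B s, 0 < psib B s) /\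
  (exists sperm : X, forall b s, 0 < psi b s sperm) /\
  (forall s, C1 (fun B => ln (psib B s))) /\
  (forall s t, (forall b, psi b s t = 0) \/
                   ((forall b, 0 < psi b s t) /\ C1 (fun b => ln (psi b s t)))).

(** Rooted locally finite trees, Ulam--Harris encoding: a tree is given by the
    number of children [c v] of each vertex [v : seq nat]; the root is [::],
    the children of [v] are [rcons v i] for [i < c v]. Every rooted locally
    finite tree is isomorphic to one of these. *)
Definition tree := seq nat -> nat.

Fixpoint valid_from (c : tree) (p s : seq nat) : bool :=
  match s with
  | [::] => true
  | i :: s' => (i < c p)%N && valid_from c (rcons p i) s'
  end.

Definition vertex (c : tree) (v : seq nat) : bool := valid_from c [::] v.

Definition children (c : tree) (v : seq nat) : seq (seq nat) :=
  [seq rcons v i | i <- iota 0 (c v)].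

Definition parent (v : seq nat) : seq nat := take (size v).-1 v.

Definition nbrs (c : tree) (v : seq nat) : seq (seq nat) :=
  (if nilp v then [::] else [:: parent v]) ++ children c v.

Definition Do (c : tree) : nat := size (nbrs c [::]).

(** Messages: [m x y] is h_{x -> y}; only its values on directed edges matter. *)
Definition msg (R : realType) (X : finType) := seq nat -> seq nat -> {ffun X -> R}.

Definition is_prob {R : realType} {X : finType} (p : {ffun X -> R}) : Prop :=
  (forall s, 0 <= p s) /\ \sum_s p s = 1.

Definition is_message {R : realType} {X : finType} (c : tree) (m : msg R X) : Prop :=
  forall x y, vertex c x -> y \in nbrs c x -> is_prob (m x y).

Definition bp_rhs {R : realType} {X : finType}
    (psi : R -> X -> X -> R) (psib : R -> X -> R) (b B : R)
    (c : tree) (m : msg R X) (x y : seq nat) (s : X) : R :=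
  psib B s * \prod_(v <- nbrs c x | v != y) \sum_t psi b s t * m v x t.

Definition bp_fixed {R : realType} {X : finType}
    (psi : R -> X -> X -> R) (psib : R -> X -> R) (b B : R)
    (c : tree) (m : msg R X) : Prop :=
  is_message c m /\
  forall x y, vertex c x -> y \in nbrs c x ->
    0 < \sum_s bp_rhs psi psib b B c m x y s /\
    forall s, m x y s = bp_rhs psi psib b B c m x y s /
                        \sum_s' bp_rhs psi psib b B c m x y s'.

Definition PhiT {R : realType} {X : finType}
    (psi : R -> X -> X -> R) (psib : R -> X -> R) (b B : R)
    (c : tree) (m : msg R X) : R :=
  ln (\sum_s psib B s * \prod_(j <- nbrs c [::]) \sum_t psi b s t * m j [::] t)
  - 2^-1 * \sum_(j <- nbrs c [::])
             ln (\sum_s \sum_t psi b s t * m j [::] t * m [::] j s).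

From HB Require Import structures.
From mathcomp Require Import all_boot all_order all_algebra.
From mathcomp Require Import all_classical all_reals all_analysis.
From mathcomp Require Import ring lra.
Set Implicit Arguments. Unset Strict Implicit. Unset Printing Implicit Defensive.
Import Order.TTheory GRing.Theory Num.Theory.
Import numFieldNormedType.Exports measurable_realfun.
Local Open Scope ring_scope.
Local Open Scope classical_set_scope.

(* On a compact parameter region every weight that is not identically zero lies in
   [1/q, q] for a single constant q, by continuity of the logarithms of the weights.
   The root partition function, a sum over spins of products over the D_o neighbours,
   then lies in [q^-(D_o+2), q^(D_o+2)]; the permissive spin keeps it away from 0.
   For a BP fixed point each edge term of the Bethe functional is the root partition
   function divided by the normaliser of the message o -> j, which obeys the same
   bounds, so every logarithm is O(D_o) and Phi = O(D_o^2).  When psi > 0, each edge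
   term is an average of weights in [1/q, q] for any messages, whence O(D_o).
   Integrating these pointwise bounds gives the averaged statements. *)

Lemma prod_bounds (R : numDomainType) (I : eqType) (r : seq I) (P : pred I)
    (F : I -> R) (lo hi : R) :
  0 <= lo <= 1 -> 1 <= hi -> {in r, forall i, lo <= F i <= hi} ->
  lo ^+ size r <= \prod_(i <- r | P i) F i <= hi ^+ size r.
Proof.
move=> /andP[lo0 lo1] hi1 hF.
set Q := [pred i | (i \in r) && P i].
have bounds_Q i : Q i -> (0 <= lo <= F i) && (0 <= F i <= hi).
  case/andP=> /hF /andP[loF Fhi] _.
  by rewrite lo0 loF Fhi (le_trans lo0 loF).
have count_Q : (count Q r <= size r)%N := count_size Q r.
rewrite big_seq_cond; apply/andP; split.
- apply: le_trans (ler_wiXn2l lo0 lo1 count_Q) _.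
  rewrite -iter_mulr_1 -big_const_seq; apply: ler_prod => i /bounds_Q /andP[] //.
- apply: le_trans (ler_weXn2l hi1 count_Q).
  rewrite -iter_mulr_1 -big_const_seq; apply: ler_prod => i /bounds_Q /andP[] //.
Qed.

Lemma norm_sum_le_size (R : numDomainType) (I : eqType) (r : seq I) (F : I -> R) (c : R) :
  {in r, forall i, `|F i| <= c} -> `|\sum_(i <- r) F i| <= (size r)%:R * c.
Proof.
move=> hF; apply: le_trans (ler_norm_sum _ _ _) _.
have -> : (size r)%:R * c = \sum_(i <- r) c.
  by rewrite big_const_seq count_predT iter_addr_0 mulr_natl.
by rewrite big_seq [leRHS]big_seq; apply: ler_sum => i /hF.
Qed.

Lemma norm_ln_le_pow (R : realType) (q x : R) (k : nat) :
  1 <= q -> q^-1 ^+ k <= x <= q ^+ k -> `|ln x| <= k%:R * ln q.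
Proof.
move=> q1 /andP[xlo xhi].
have q0 : 0 < q := lt_le_trans ltr01 q1.
have x0 : 0 < x by apply: lt_le_trans xlo; rewrite exprn_gt0 // invr_gt0.
rewrite ler_norml mulr_natl -lnXn // -lnV ?posrE ?exprn_gt0 //.
by rewrite !ler_ln ?posrE ?invr_gt0 ?exprn_gt0 // -exprVn xlo xhi.
Qed.

Lemma divr_pow_bounds (R : realType) (q x y : R) (k : nat) : 1 <= q ->
  q^-1 ^+ k <= x <= q ^+ k -> q^-1 ^+ k <= y <= q ^+ k ->
  q^-1 ^+ (k + k) <= x / y <= q ^+ (k + k).
Proof.
move=> q1 /andP[x1 x2] /andP[y1 y2].
have q0 : 0 < q := lt_le_trans ltr01 q1.
have lo0 : 0 < q^-1 ^+ k by rewrite exprn_gt0 // invr_gt0.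
have y0 : 0 < y := lt_le_trans lo0 y1.
rewrite !exprD; apply/andP; split; apply: ler_pM.
- exact: ltW.
- exact: ltW.
- exact: x1.
- by rewrite exprVn lef_pV2 ?posrE ?exprn_gt0.
- exact: le_trans (ltW lo0) x1.
- by rewrite invr_ge0 ltW.
- exact: x2.
- by rewrite -[q ^+ k]invrK -exprVn lef_pV2 ?posrE ?exprn_gt0 // invr_gt0.
Qed.

Lemma prob_mean_bounds (R : realType) (X : finType) (w : X -> R) (h : {ffun X -> R})
    (lo hi : R) :
  is_prob h -> (forall t, lo <= w t <= hi) -> lo <= \sum_t w t * h t <= hi.
Proof.
move=> [h_ge0 h_sum1] hw; rewrite -[lo]mulr1 -[hi]mulr1 -h_sum1 !mulr_sumr.
by apply/andP; split; apply: ler_sum => t _; apply: ler_wpM2r => //;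
  case/andP: (hw t).
Qed.

Lemma prob_mean2_bounds (R : realType) (X : finType) (w : X -> X -> R)
    (h g : {ffun X -> R}) (lo hi : R) :
  is_prob h -> is_prob g -> (forall s t, lo <= w s t <= hi) ->
  lo <= \sum_s \sum_t w s t * h t * g s <= hi.
Proof.
move=> hh hg hw; under eq_bigr => s _ do rewrite -mulr_suml.
by apply: prob_mean_bounds => // s; apply: prob_mean_bounds.
Qed.

(* The term of the spin [s0] alone gives the lower bound, [#|X| <= q] the upper one. *)
Lemma weighted_prod_sum_bounds (R : realType) (X : finType) (I : eqType) (r : seq I)
    (P : pred I) (w : X -> R) (G : X -> I -> R) (q : R) (s0 : X) :
  1 <= q -> #|X|%:R <= q -> (forall s, q^-1 <= w s <= q) ->
  (forall s, {in r, forall j, 0 <= G s j <= q}) -> {in r, forall j, q^-1 <= G s0 j} ->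
  q^-1 ^+ (size r).+2 <= \sum_s w s * \prod_(j <- r | P j) G s j <= q ^+ (size r).+2.
Proof.
move=> q1 card_le hw hG hG0.
have q0 : 0 < q := lt_le_trans ltr01 q1.
have qi0 : 0 <= q^-1 by rewrite invr_ge0 ltW.
have qi1 : q^-1 <= 1 by rewrite invf_le1.
have qi01 : 0 <= q^-1 <= 1 by rewrite qi0 qi1.
have w0 s : 0 <= w s by apply: le_trans qi0 _; case/andP: (hw s).
have prod_G s : 0 <= \prod_(j <- r | P j) G s j <= q ^+ size r.
  have lo01 : 0 <= (0 : R) <= 1 by rewrite lexx ler01.
  have /andP[+ ->] := @prod_bounds _ _ r P (G s) 0 q lo01 q1 (hG s).
  by rewrite andbT; apply: le_trans; rewrite exprn_ge0.
have prod_G0 : q^-1 ^+ size r <= \prod_(j <- r | P j) G s0 j.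
  have G0_bounds : {in r, forall j, q^-1 <= G s0 j <= q}.
    by move=> j jr; rewrite hG0 //=; case/andP: (hG s0 j jr).
  by case/andP: (@prod_bounds _ _ r P (G s0) _ _ qi01 q1 G0_bounds).
apply/andP; split.
- apply: le_trans (ler_wiXn2l qi0 qi1 (leqnSn (size r).+1)) _.
  apply: (le_trans (y := w s0 * \prod_(j <- r | P j) G s0 j)).
    by rewrite exprS; apply: ler_pM; rewrite ?exprn_ge0 //; case/andP: (hw s0).
  rewrite (bigD1 s0) //= lerDl; apply: sumr_ge0 => s _.
  by rewrite mulr_ge0 //; case/andP: (prod_G s).
- apply: (le_trans (y := \sum_(s : X) q * q ^+ size r)).
    apply: ler_sum => s _; case/andP: (hw s) (prod_G s) => _ ws /andP[p0 pq].
    exact: ler_pM.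
  have qn0 : 0 <= q * q ^+ size r by rewrite mulr_ge0 ?exprn_ge0 ?ltW.
  rewrite sumr_const -mulr_natr !exprS.
  move: (q ^+ size r) qn0 => a; nra.
Qed.

Lemma root_nbr_vertex (c : tree) (j : seq nat) :
  j \in nbrs c [::] -> vertex c j /\ [::] \in nbrs c j.
Proof.
by case/mapP=> i; rewrite mem_iota add0n /= => hi ->; rewrite /vertex /= hi mem_head.
Qed.

Lemma uniq_root_nbrs (c : tree) : uniq (nbrs c [::]).
Proof. by rewrite map_inj_uniq ?iota_uniq // => i i' []. Qed.

Section BetheBounds.
Variables (R : realType) (X : finType) (psi : R -> X -> X -> R) (psib : R -> X -> R)
  (b B : R).

Definition root_partition (c : tree) (m : msg R X) : R :=
  \sum_s psib B s * \prod_(j <- nbrs c [::]) \sum_t psi b s t * m j [::] t.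

Definition edge_partition (c : tree) (m : msg R X) (j : seq nat) : R :=
  \sum_s \sum_t psi b s t * m j [::] t * m [::] j s.

Lemma PhiTE (c : tree) (m : msg R X) :
  PhiT psi psib b B c m =
  ln (root_partition c m) - 2^-1 * \sum_(j <- nbrs c [::]) ln (edge_partition c m j).
Proof. by []. Qed.

(* Substituting the BP equation for [m [::] j] turns the edge sum into the root sum
   divided by the BP normaliser of the message [o -> j]. *)
Lemma edge_partition_bp (c : tree) (m : msg R X) (j : seq nat) :
  bp_fixed psi psib b B c m -> j \in nbrs c [::] ->
  edge_partition c m j =
  root_partition c m / \sum_s bp_rhs psi psib b B c m [::] j s.
Proof.
move=> [_ bp] jo; have [_ m_oj] := bp [::] j isT jo.
rewrite /edge_partition /root_partition mulr_suml; apply: eq_bigr => s _.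
rewrite -mulr_suml m_oj /bp_rhs (bigD1_seq j jo (uniq_root_nbrs c)) /=.
by rewrite !mulrA [_ * psib B s]mulrC.
Qed.

Variables (q : R) (sperm : X).
Hypotheses (q_ge1 : 1 <= q) (card_le_q : #|X|%:R <= q)
  (psib_bounds : forall s, q^-1 <= psib B s <= q)
  (psi_bounds : forall s t, 0 <= psi b s t <= q)
  (psi_sperm : forall t, q^-1 <= psi b sperm t).

Lemma root_prod_sum_bounds (c : tree) (m : msg R X) (P : pred (seq nat)) :
  is_message c m ->
  q^-1 ^+ (Do c).+2
    <= \sum_s psib B s * \prod_(j <- nbrs c [::] | P j) \sum_t psi b s t * m j [::] t
    <= q ^+ (Do c).+2.
Proof.
move=> hm; apply: (weighted_prod_sum_bounds P (s0 := sperm)) => // [s j | j].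
  all: case/root_nbr_vertex => vj oj.
- exact: prob_mean_bounds (hm _ _ vj oj) (psi_bounds s).
- have sperm_bounds t : q^-1 <= psi b sperm t <= q.
    by rewrite psi_sperm; case/andP: (psi_bounds sperm t).
  by case/andP: (prob_mean_bounds (hm _ _ vj oj) sperm_bounds).
Qed.

Lemma norm_PhiT_le (c : tree) (m : msg R X) (e : R) : is_message c m ->
  {in nbrs c [::], forall j, `|ln (edge_partition c m j)| <= e * ln q} ->
  `|PhiT psi psib b B c m| <= ((Do c)%:R + 2 + 2^-1 * ((Do c)%:R * e)) * ln q.
Proof.
move=> hm he; rewrite PhiTE mulrDl; apply: le_trans (ler_normB _ _) _; apply: lerD.
  have := norm_ln_le_pow q_ge1 (root_prod_sum_bounds xpredT hm).
  by rewrite -addn2 natrD.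
rewrite normrM ger0_norm ?invr_ge0 ?ler0n // -mulrA ler_wpM2l ?invr_ge0 ?ler0n //.
by rewrite -mulrA; apply: norm_sum_le_size.
Qed.

Lemma norm_PhiT_bp_le (c : tree) (m : msg R X) :
  bp_fixed psi psib b B c m ->
  `|PhiT psi psib b B c m| <= 4 * ln q * ((Do c)%:R ^+ 2 + 1).
Proof.
move=> bp; have hm := bp.1.
apply: le_trans (norm_PhiT_le (e := (Do c)%:R + 2 + ((Do c)%:R + 2)) hm _) _.
  move=> j jo; rewrite edge_partition_bp //.
  have := norm_ln_le_pow q_ge1 (divr_pow_bounds q_ge1
    (root_prod_sum_bounds xpredT hm) (root_prod_sum_bounds (predC1 j) hm)).
  by rewrite natrD -addn2 natrD.
have L0 : 0 <= ln q by rewrite ln_ge0.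
have D0 : 0 <= (Do c)%:R :> R by rewrite ler0n.
rewrite [leRHS]mulrAC; apply: ler_wpM2r => //; move: (Do c)%:R D0 => D D0; nra.
Qed.

Lemma norm_PhiT_message_le (c : tree) (m : msg R X) :
  (forall s t, q^-1 <= psi b s t) -> is_message c m ->
  `|PhiT psi psib b B c m| <= 4 * ln q * ((Do c)%:R + 1).
Proof.
move=> psi_ge hm; apply: le_trans (norm_PhiT_le (e := 1) hm _) _.
  move=> j jo; have [vj oj] := root_nbr_vertex jo.
  apply: (norm_ln_le_pow (k := 1)) => //; rewrite !expr1 /edge_partition.
  apply: (prob_mean2_bounds (hm _ _ vj oj) (hm [::] j isT jo)) => s t.
  by rewrite psi_ge; case/andP: (psi_bounds s t).
have L0 : 0 <= ln q by rewrite ln_ge0.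
have D0 : 0 <= (Do c)%:R :> R by rewrite ler0n.
rewrite [leRHS]mulrAC; apply: ler_wpM2r => //; move: (Do c)%:R D0 => D D0; lra.
Qed.

End BetheBounds.

Lemma compact_continuous_bounded (R : realType) (T : topologicalType) (K : set T)
    (f : T -> R) :
  compact K -> continuous f -> exists M : R, forall x, K x -> `|f x| <= M.
Proof.
move=> hK fc.
have fK : compact (f @` K).
  by apply: continuous_compact hK; apply: continuous_subspaceT => x; apply: fc.
have [r [_ hr]] := compact_bounded fK.
exists (`|r| + 1) => x Kx; apply: (hr (`|r| + 1)); last by exists x.
by apply: le_lt_trans (ler_norm r) _; rewrite ltrDl.
Qed.

Lemma finite_family_bounded (R : realType) (I : finType) (T : Type) (A : set T)
    (f : I -> T -> R) :
  (forall i, exists M : R, forall x, A x -> `|f i x| <= M) ->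
  exists M : R, forall i x, A x -> `|f i x| <= M.
Proof.
move=> /boolp.choice[M hM]; exists (\sum_i `|M i|) => i x Ax.
apply: le_trans (hM i x Ax) _; apply: le_trans (ler_norm (M i)) _.
by rewrite (bigD1 i) //= lerDl sumr_ge0.
Qed.

Lemma C1_continuous (R : realType) (f : R -> R) : C1 f -> continuous f.
Proof.
by move=> [f_der _] x; apply: differentiable_continuous; rewrite -derivable1_diffP.
Qed.

Lemma norm_ln_le_bounds (R : realType) (x M q : R) :
  0 < x -> `|ln x| <= M -> expR M <= q -> q^-1 <= x <= q.
Proof.
move=> x0; rewrite ler_norml => /andP[lnx_lo lnx_hi] Mq.
have x_exp : expR (ln x) = x by rewrite lnK.
apply/andP; split.
- apply: (le_trans (y := expR (- M))); last by rewrite -x_exp ler_expR.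
  by rewrite expRN lef_pV2 ?posrE ?expR_gt0 // (lt_le_trans (expR_gt0 M) Mq).
- by apply: le_trans Mq; rewrite -x_exp ler_expR.
Qed.

Lemma H1_weights_bounded (R : realType) (X : finType) (psi : R -> X -> X -> R)
    (psib : R -> X -> R) (K : set (R * R)) :
  H1 psi psib -> compact K ->
  exists (q : R) (sperm : X), [/\ 1 <= q, #|X|%:R <= q &
    forall b B, K (b, B) ->
    [/\ forall s, q^-1 <= psib B s <= q, forall s t, 0 <= psi b s t <= q,
        forall t, q^-1 <= psi b sperm t
      & forall s t, 0 < psi b s t -> q^-1 <= psi b s t]].
Proof.
move=> [psi_ge0 [psi_sym [psib_gt0 [[sperm psi_sperm] [psib_C1 psi_cases]]]]] hK.
have [Mb hMb] : exists Mb : R,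
    forall s bB, K bB -> `|((fun B => ln (psib B s)) \o snd) bB| <= Mb.
  apply: finite_family_bounded => s; apply: compact_continuous_bounded hK _ => bB.
  by apply: continuous_comp; [exact: cvg_snd | exact: C1_continuous (psib_C1 s) _].
have [Mp hMp] : exists Mp : R,
    forall st : (X * X)%type, forall bB, K bB ->
    `|((fun b => ln (psi b st.1 st.2)) \o fst) bB| <= Mp.
  apply: finite_family_bounded => -[s t]; apply: compact_continuous_bounded hK _ => bB.
  apply: continuous_comp; first exact: cvg_fst.
  case: (psi_cases s t) => [psi0 | [_ /C1_continuous psi_cont]]; last exact: psi_cont.
  rewrite (_ : (fun b => _) = cst (ln 0)); first exact: cst_continuous.
  by apply: boolp.funext => b'; rewrite psi0.
pose M := Num.max Mb Mp; pose q := #|X|%:R + expR M.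
have q_ge1 : 1 <= q.
  by rewrite -[1]addr0 lerD ?expR_ge0 // ler1n; apply/card_gt0P; exists sperm.
have M_le_q : expR M <= q by rewrite lerDr.
exists q, sperm; split => //; first by rewrite lerDl expR_ge0.
move=> b B KbB.
have psi_within s t : 0 < psi b s t -> q^-1 <= psi b s t <= q.
  move=> psi_gt0; apply: norm_ln_le_bounds psi_gt0 _ M_le_q.
  by apply: le_trans (hMp (s, t) (b, B) KbB) _; rewrite le_max lexx orbT.
split.
- move=> s; apply: norm_ln_le_bounds (psib_gt0 B s) _ M_le_q.
  by apply: le_trans (hMb s (b, B) KbB) _; rewrite le_max lexx.
- move=> s t; rewrite psi_ge0 /=; case: (psi_cases s t) => [-> | [psi_gt0 _]].
    exact: le_trans ler01 q_ge1.
  by case/andP: (psi_within s t (psi_gt0 b)).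
- by move=> t; rewrite psi_sym; case/andP: (psi_within t sperm (psi_sperm b t)).
- by move=> s t /psi_within /andP[].
Qed.

Lemma integral_le_affine (R : realType) (d : measure_display) (Omega : measurableType d)
    (P : probability Omega R) (f g : Omega -> R) (C : R) :
  0 <= C -> measurable_fun setT f -> measurable_fun setT g -> (forall w, 0 <= g w) ->
  (\int[P]_w (g w)%:E < +oo)%E ->
  {ae P, forall w, `|f w| <= C * (g w + 1)} ->
  (`|\int[P]_w (f w)%:E| <= (C * (fine (\int[P]_w (g w)%:E) + 1))%:E)%E.
Proof.
move=> C0 mf mg g0 g_fin f_le.
have mfE : measurable_fun setT (EFin \o f) by apply/measurable_EFinP.
have mgE : measurable_fun setT (EFin \o g) by apply/measurable_EFinP.
have mh : measurable_fun setT (fun w => (C * (g w + 1))%:E).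
  by apply/measurable_EFinP; apply: measurable_funM => //; apply: measurable_funD.
apply: le_trans (le_abse_integral _ _ mfE) _ => //.
apply: le_trans (@ae_ge0_le_integral _ _ _ P setT measurableT _ _ _ _ _ mh _) _.
- by move=> w _; rewrite abse_ge0.
- exact: measurableT_comp.
- by move=> w _; rewrite lee_fin mulr_ge0 // addr_ge0.
- by apply: filterS f_le => w hw _; rewrite /= lee_fin.
have -> : (fun w => (C * (g w + 1))%:E) = (fun w => C%:E * ((g w)%:E + 1))%E.
  by apply: boolp.funext => w; rewrite EFinM EFinD.
rewrite ge0_integralZl_EFin //; last 2 first.
- by move=> w _; rewrite adde_ge0 // lee_fin.
- exact: emeasurable_funD.
rewrite ge0_integralD //; last by move=> w _; rewrite lee_fin.
have -> : (\int[P]_w 1 = 1)%E.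
  by rewrite -[(fun _ => _)]/(cst 1%E) integral_cst // mul1e; apply: probability_setT.
have g_fin_num : (\int[P]_w (g w)%:E)%E \is a fin_num.
  by rewrite ge0_fin_numE // integral_ge0 // => w _; rewrite lee_fin.
by rewrite -{1}(fineK g_fin_num) -EFinD -EFinM.
Qed.

Theorem mainTheorem9 (R : realType) (X : finType)
    (psi : R -> X -> X -> R) (psib : R -> X -> R)
    (hH1 : H1 psi psib) (K : set (R * R)) (hK : compact K) :
  exists C : R,
    (forall b B, K (b, B) -> forall (c : tree) (m : msg R X),
       bp_fixed psi psib b B c m ->
       `|PhiT psi psib b B c m| <= C * ((Do c)%:R ^+ 2 + 1))
    /\
    ((forall b s t, 0 < psi b s t) ->
     forall b B, K (b, B) -> forall (c : tree) (m : msg R X),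
       is_message c m ->
       `|PhiT psi psib b B c m| <= C * ((Do c)%:R + 1))
    /\
    (forall (d : measure_display) (Omega : measurableType d)
            (P : probability Omega R) (T : Omega -> tree),
       measurable_fun setT (fun w => (Do (T w))%:R : R) ->
       ((\int[P]_w (((Do (T w))%:R ^+ 2 : R))%:E < +oo)%E ->
        exists C' : R, forall b B, K (b, B) -> forall m : Omega -> msg R X,
          {ae P, forall w, bp_fixed psi psib b B (T w) (m w)} ->
          measurable_fun setT (fun w => PhiT psi psib b B (T w) (m w)) ->
          (`| \int[P]_w (PhiT psi psib b B (T w) (m w))%:E | <= C'%:E)%E)
       /\
       ((forall b s t, 0 < psi b s t) ->
        (\int[P]_w ((Do (T w))%:R : R)%:E < +oo)%E ->
        exists C' : R, forall b B, K (b, B) -> forall m : Omega -> msg R X,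
          {ae P, forall w, is_message (T w) (m w)} ->
          measurable_fun setT (fun w => PhiT psi psib b B (T w) (m w)) ->
          (`| \int[P]_w (PhiT psi psib b B (T w) (m w))%:E | <= C'%:E)%E)).
Proof.
have [q [sperm [q_ge1 card_le_q weights]]] := H1_weights_bounded hH1 hK.
have C_ge0 : 0 <= 4 * ln q by rewrite mulr_ge0 // ln_ge0.
have part_a b B : K (b, B) -> forall c m, bp_fixed psi psib b B c m ->
    `|PhiT psi psib b B c m| <= 4 * ln q * ((Do c)%:R ^+ 2 + 1).
  by case/weights=> psib_bd psi_bd psi_sperm _ c m; apply: norm_PhiT_bp_le.
have part_b : (forall b s t, 0 < psi b s t) -> forall b B, K (b, B) ->
    forall c m, is_message c m -> `|PhiT psi psib b B c m| <= 4 * ln q * ((Do c)%:R + 1).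
  move=> psi_gt0 b B /weights[psib_bd psi_bd psi_sperm psi_pos] c m.
  by apply: norm_PhiT_message_le => // s t; apply: psi_pos.
exists (4 * ln q); split=> //; split=> // d Omega P T mDo; split.
- move=> Do2_fin.
  exists (4 * ln q * (fine (\int[P]_w (((Do (T w))%:R ^+ 2 : R))%:E) + 1)).
  move=> b B KbB m bp_ae mPhi; apply: integral_le_affine => //.
    exact: measurable_funX.
  by apply: filterS bp_ae => w; apply: part_a.
- move=> psi_gt0 Do_fin.
  exists (4 * ln q * (fine (\int[P]_w ((Do (T w))%:R : R)%:E) + 1)).
  move=> b B KbB m msg_ae mPhi; apply: integral_le_affine => //.
  by apply: filterS msg_ae => w; apply: part_b.
Qed.
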